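(* Let $V$ be a topological real vector space and $N$ a Minkowski norm on $V$. The following are equivalent: (1) $N$ is strictly sub-convex. (2) $N$ is continuous, and for any two vectors $x\neq y$ in $V$ with $N(x)=N(y)=1$ one has $N\big((x+y)/2\big)<1$.
   Context: Topological real vector spaces are not assumed Hausdorff. A Minkowski norm on a real vector space $V$ is a function $N:V\to\mathbb{R}$ that is non-negative, satisfies $N(\lambda x)=\lambda N(x)$ for all $x\in V$ and real $\lambda>0$, satisfies $N(x+y)\le N(x)+N(y)$ for all $x,y$, and satisfies $N(x)\neq 0$ for $x\neq 0$. For $f:C\to\mathbb{R}$ and $r\in\mathbb{R}$, the sublevel set is $S_r(f)=\{x\in C: f(x)\le r\}$. For a subset $S$ of a topological real vector space, $\mathrm{Aff}(S)$ is its affine hull; the relative interior $\mathrm{ri}(S)$ and relative closure $\mathrm{rc}(S)$ are the interior and closure of $S$ in the subspace topology of $\mathrm{Aff}(S)$. For $x,y$, $]x,y[=\{(1-t)x+ty: t\in[0,1]\}\setminus\{x,y\}$. A subset $C$ is strictly convex if for any two distinct points $x,y\in\mathrm{rc}(C)$ one has $]x,y[\subseteq \mathrm{ri}(C)$. A function $f:C\to\mathbb{R}$ on a subset $C$ of a topological real vector space is strictly sub-convex if $S_r(f)$ is strictly convex for every $r\in\mathbb{R}$. *)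

From HB Require Import structures.
From mathcomp Require Import all_boot all_order all_algebra.
From mathcomp Require Import all_classical all_reals all_analysis.
Set Implicit Arguments. Unset Strict Implicit. Unset Printing Implicit Defensive.
Import Order.TTheory GRing.Theory Num.Theory.
Local Open Scope classical_set_scope.
Local Open Scope ring_scope.

Section Defs.
Variables (R : realType) (V : topologicalLmodType R).

Definition minkowski_norm (N : V -> R) : Prop :=
  [/\ (forall x, 0 <= N x),
      (forall (l : R) x, 0 < l -> N (l *: x) = l * N x),
      (forall x y, N (x + y) <= N x + N y) &
      (forall x, x != 0 -> N x != 0)].

Definition sublevel (f : V -> R) (r : R) : set V := [set x | f x <= r].

Definition aff_hull (S : set V) : set V :=
  [set x | exists (n : nat) (p : 'I_n -> V) (c : 'I_n -> R),
      [/\ (forall i, S (p i)), \sum_(i < n) c i = 1 &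
          x = \sum_(i < n) c i *: p i]].

Definition rel_interior (S : set V) : set V :=
  [set x | S x /\ exists U : set V, [/\ open U, U x & U `&` aff_hull S `<=` S]].

Definition rel_closure (S : set V) : set V :=
  [set x | aff_hull S x /\
     forall U : set V, open U -> U x -> U `&` S !=set0].

Definition open_segment (x y : V) : set V :=
  [set z | (exists t : R, [/\ 0 <= t, t <= 1 & z = (1 - t) *: x + t *: y])
           /\ z != x /\ z != y].

Definition strictly_convex (C : set V) : Prop :=
  forall x y, rel_closure C x -> rel_closure C y -> x != y ->
    open_segment x y `<=` rel_interior C.

Definition strictly_subconvex (f : V -> R) : Prop :=
  forall r : R, strictly_convex (sublevel f r).

End Defs.

From HB Require Import structures.
From mathcomp Require Import all_boot all_order all_algebra.
From mathcomp Require Import all_classical all_reals all_analysis.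
From mathcomp Require Import ring lra.
Set Implicit Arguments. Unset Strict Implicit. Unset Printing Implicit Defensive.
Import Order.TTheory GRing.Theory Num.Theory.
Import numFieldTopology.Exports.
Local Open Scope classical_set_scope.
Local Open Scope ring_scope.

(* For r > 0 the sublevel set B_r = {N <= r} is absorbing, so its affine hull
   is all of V and its relative interior is its interior.
   (1) => (2): if v <> 0, then 0 lies on an open segment between two points of
   B_r on the line through v, so B_r is a neighbourhood of 0 for every r > 0;
   with subadditivity this gives continuity.  The midpoint of two distinct
   points of the unit sphere is interior to B_1, so some t > 1 times it is
   still in B_1 and its norm is < 1.
   (2) => (1): by continuity B_r is closed and {N < r} is open, so it suffices
   that open segments between points of B_r lie in {N < r}.  If both endpoints
   are on the sphere of radius r, their midpoint m has norm < r by hypothesis,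
   and every point of the open segment is a convex combination giving positive
   weight to m. *)

Section AffineTopology.
Variables (R : realType) (V : topologicalLmodType R).
Implicit Types (S U : set V) (x y z : V).

Lemma aff_hull_self S x : S x -> aff_hull S x.
Proof.
move=> Sx; exists 1%N, (fun=> x), (fun=> 1); split => //.
  by rewrite big_ord1.
by rewrite big_ord1 scale1r.
Qed.

Lemma rel_closure_self S x : S x -> rel_closure S x.
Proof. by move=> Sx; split; [exact: aff_hull_self | move=> U _ Ux; exists x]. Qed.

Lemma rel_closure_closed S : closed S -> rel_closure S `<=` S.
Proof.
move=> clS x [_ hx]; apply: contrapT => nSx.
by have [y [nSy Sy]] := hx _ (closed_openC clS) nSx.
Qed.

Lemma rel_interior_nbhs S x :
  (forall y, aff_hull S y) -> rel_interior S x -> nbhs x S.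
Proof.
move=> affS [_ [U [oU Ux US]]].
apply: filterS (open_nbhs_nbhs (conj oU Ux)) => y Uy.
exact: US (conj Uy (affS y)).
Qed.

Lemma open_sub_rel_interior S U : open U -> U `<=` S -> U `<=` rel_interior S.
Proof.
move=> oU US x Ux; split; first exact: US.
by exists U; split => // y [/US].
Qed.

Lemma nbhs0_translate x U : nbhs 0 U -> nbhs x [set y | U (y - x)].
Proof.
move=> /(nbhsT_subproof add_continuous x); apply: filterS => _ [u Uu <-].
by rewrite /= addrC addKr.
Qed.

Lemma nbhs0_opp U : nbhs 0 U -> nbhs (0 : V) [set u | U (- u)].
Proof. by move=> U0; apply: (opp_continuous 0); rewrite oppr0. Qed.

Lemma nbhs_scale_gt1 z S : nbhs z S -> exists2 t : R, 1 < t & S (t *: z).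
Proof.
move=> Sz.
have : nbhs (1 : R^o) [set t : R | S (t *: z)].
  have scale_z : (fun t : R^o => t *: z) @ (1 : R^o) --> (1 : R^o) *: z.
    apply: (@continuous_comp R^o (R^o * V)%type V (fun t => (t, z))
      (fun p => p.1 *: p.2)); last exact: scale_continuous.
    by apply: (@cvg_pair _ _ _ (nbhs (1 : R^o)) (nbhs (1 : R^o)) (nbhs z));
      [exact: cvg_id | exact: cvg_cst].
  by rewrite scale1r in scale_z; exact: scale_z.
move=> /nbhs_ballP[d /= d0 hd]; exists (1 + d / 2); first by lra.
apply: hd; rewrite /ball /= opprD addrA subrr add0r normrN.
by rewrite ger0_norm ?divr_ge0 ?ltW //; lra.
Qed.

Lemma open_segmentP x y z : open_segment x y z ->
  exists t : R, [/\ 0 < t, t < 1 & z = (1 - t) *: x + t *: y].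
Proof.
case=> [[t [t0 t1 ->]] [zx zy]]; exists t; split => //.
- rewrite lt_neqAle t0 andbT; apply: contraNneq zx => <-.
  by rewrite subr0 scale1r scale0r addr0.
- rewrite lt_neqAle t1 andbT; apply: contraNneq zy => ->.
  by rewrite subrr scale0r add0r scale1r.
Qed.

Lemma open_segment_neq x y z : open_segment x y z -> x != y.
Proof.
case=> [[t [_ _ ->]] [zx _]]; apply: contraNneq zx => <-.
by rewrite -scalerDl subrK scale1r.
Qed.

Lemma open_segment_midpoint x y : x != y -> open_segment x y (2^-1 *: (x + y)).
Proof.
move=> xy; have h2 : (2 : R) != 0 by rewrite pnatr_eq0.
have double (v : V) : 2 *: v = v + v by rewrite -[2]/(1 + 1) scalerDl scale1r.
split.
  exists 2^-1; split.
  - by rewrite invr_ge0 ler0n.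
  - by rewrite invf_le1 ?ler1n // ltr0n.
  - by rewrite scalerDr (_ : 1 - 2^-1 = 2^-1 :> R) //; field.
split; apply: contraNneq xy => /(congr1 (fun v => 2 *: v));
  rewrite scalerA mulfV // scale1r double.
- by move/addrI->.
- by move/(addIr y)->.
Qed.

Lemma open_segment0 (a b : R) (v : V) : 0 < a -> 0 < b -> v != 0 ->
  open_segment (a *: v) (b *: - v) 0.
Proof.
move=> a0 b0 v0; have ab0 : a + b != 0 by rewrite gt_eqF // addr_gt0.
split.
  exists (a / (a + b)); split.
  - by rewrite divr_ge0 // ltW // addr_gt0.
  - by rewrite ler_pdivrMr ?addr_gt0 // mul1r lerDl ltW.
  - rewrite !scalerA scalerN -scaleNr -scalerDl.
    suff -> : (1 - a / (a + b)) * a + - (a / (a + b) * b) = 0 by rewrite scale0r.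
    by field.
by split; rewrite eq_sym scaler_eq0 negb_or ?oppr_eq0 v0 gt_eqF.
Qed.

End AffineTopology.

Section MinkowskiNorm.
Variables (R : realType) (V : topologicalLmodType R) (N : V -> R).
Hypothesis hN : minkowski_norm N.

Lemma minkowski_norm_ge0 x : 0 <= N x. Proof. by case: hN. Qed.

Lemma minkowski_normD x y : N (x + y) <= N x + N y. Proof. by case: hN. Qed.

Lemma minkowski_norm_eq0 x : N x = 0 -> x = 0.
Proof. by case: hN => _ _ _ h Nx0; apply/eqP/(contraTT (h x)); rewrite Nx0. Qed.

Lemma minkowski_norm_gt0 x : x != 0 -> 0 < N x.
Proof.
move=> x0; rewrite lt_neqAle minkowski_norm_ge0 andbT eq_sym.
by apply: contra x0 => /eqP/minkowski_norm_eq0 ->.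
Qed.

Lemma minkowski_norm0 : N 0 = 0.
Proof.
case: hN => _ hom _ _.
by have := hom 2 0 (ltr0Sn _ 1); rewrite scaler0; lra.
Qed.

Lemma minkowski_normZ (l : R) x : 0 <= l -> N (l *: x) = l * N x.
Proof.
case: hN => _ hom _ _; rewrite le_eqVlt => /orP[/eqP<-|]; last exact: hom.
by rewrite scale0r mul0r minkowski_norm0.
Qed.

Lemma minkowski_norm_convex (a b : R) u v : 0 <= a -> 0 <= b ->
  N (a *: u + b *: v) <= a * N u + b * N v.
Proof.
by move=> a0 b0; rewrite -!minkowski_normZ //; exact: minkowski_normD.
Qed.

Lemma minkowski_norm_convex_lt (a b r : R) u v :
  0 <= a -> 0 < b -> a + b = 1 -> N u <= r -> N v < r -> N (a *: u + b *: v) < r.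
Proof.
move=> a0 b0 ab1 ur vr.
have := minkowski_norm_convex u v a0 (ltW b0); nra.
Qed.

Lemma aff_hull_sublevel (r : R) y : 0 < r -> aff_hull (sublevel N r) y.
Proof.
move=> r0; have := minkowski_norm_ge0 y => y0.
have d0 : 0 < N y + r by lra.
pose p : 'I_2 -> V := fun i => if val i == 0%N then (r / (N y + r)) *: y else 0.
pose c : 'I_2 -> R := fun i => if val i == 0%N then (N y + r) / r else 1 - (N y + r) / r.
exists 2%N, p, c; split.
- move=> i; rewrite /p /sublevel /=; case: ifP => _; last by rewrite minkowski_norm0 ltW.
  rewrite minkowski_normZ; last by rewrite divr_ge0 // ltW.
  by rewrite mulrAC ler_pdivrMr // ler_wpM2l ?ltW //; lra.
- by rewrite !big_ord_recr big_ord0 /= /c /= add0r addrC subrK.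
- rewrite !big_ord_recr big_ord0 /= /c /p /= scaler0 addr0 add0r scalerA.
  by rewrite mulrA divfK ?gt_eqF // divff ?gt_eqF // scale1r.
Qed.

Lemma sublevel_lt_of_nbhs (r : R) z : 0 < r -> nbhs z (sublevel N r) -> N z < r.
Proof.
move=> r0 /nbhs_scale_gt1[t t1]; rewrite /sublevel /= minkowski_normZ; last lra.
have := minkowski_norm_ge0 z; nra.
Qed.

Lemma sublevel_closed (r : R) : continuous N -> closed (sublevel N r).
Proof. by move=> cN; apply: preimage_closed (fun x _ => cN x) (@closed_le _ r). Qed.

Lemma strict_sublevel_open (r : R) : continuous N -> open [set x | N x < r].
Proof. by move=> cN; apply: open_comp (fun x _ => cN x) (@open_lt _ r). Qed.

Lemma continuous_of_sublevel_nbhs0 :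
  (forall e : R, 0 < e -> nbhs 0 (sublevel N e)) -> continuous N.
Proof.
move=> Be x; apply/cvgrPdist_lt => e e0.
have /Be B : 0 < e / 2 by rewrite divr_gt0.
apply: filterS2 (nbhs0_translate x B) (nbhs0_translate x (nbhs0_opp B)).
move=> y; rewrite /sublevel /= opprB => yx xy.
have := minkowski_normD (y - x) x; rewrite subrK.
have := minkowski_normD (x - y) y; rewrite subrK.
by rewrite ltr_distlC; move=> *; apply/andP; split; lra.
Qed.

Section StrictlySubconvex.
Hypothesis hS : strictly_subconvex N.

Lemma strictly_subconvex_segment_nbhs (r : R) x y z : 0 < r ->
  N x <= r -> N y <= r -> x != y -> open_segment x y z -> nbhs z (sublevel N r).
Proof.
move=> r0 xr yr xy xyz; apply: rel_interior_nbhs => [w|]; first exact: aff_hull_sublevel.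
by apply: (hS _ _ xy xyz); apply: rel_closure_self.
Qed.

Lemma strictly_subconvex_sublevel_nbhs0 (r : R) : 0 < r -> nbhs 0 (sublevel N r).
Proof.
move=> r0; have [[v v0]|] := pselect (exists v : V, v != 0); last first.
  move=> V0; apply: filterS filterT => x _.
  have -> : x = 0 by apply: contrapT => /eqP x0; apply: V0; exists x.
  by rewrite /sublevel /= minkowski_norm0 ltW.
have Nv := minkowski_norm_gt0 v0.
have Nnv : 0 < N (- v) by rewrite minkowski_norm_gt0 ?oppr_eq0.
have ur : N ((r / N v) *: v) <= r.
  by rewrite minkowski_normZ ?divfK ?gt_eqF // divr_ge0 ?ltW.
have wr : N ((r / N (- v)) *: - v) <= r.
  by rewrite minkowski_normZ ?divfK ?gt_eqF // divr_ge0 ?ltW.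
have seg := open_segment0 (divr_gt0 r0 Nv) (divr_gt0 r0 Nnv) v0.
exact: strictly_subconvex_segment_nbhs r0 ur wr (open_segment_neq seg) seg.
Qed.

Lemma strictly_subconvex_continuous : continuous N.
Proof.
apply: continuous_of_sublevel_nbhs0 => e e0.
exact: strictly_subconvex_sublevel_nbhs0.
Qed.

Lemma strictly_subconvex_midpoint_lt x y : x != y -> N x = 1 -> N y = 1 ->
  N (2^-1 *: (x + y)) < 1.
Proof.
move=> xy Nx Ny; apply: sublevel_lt_of_nbhs ltr01 _.
by apply: strictly_subconvex_segment_nbhs (open_segment_midpoint xy);
  rewrite ?Nx ?Ny.
Qed.

End StrictlySubconvex.

Section MidpointLt.
Hypothesis hmid : forall x y : V, x != y -> N x = 1 -> N y = 1 ->
  N (2^-1 *: (x + y)) < 1.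

Lemma midpoint_lt (r : R) x y : x != y -> N x = r -> N y = r ->
  N (2^-1 *: (x + y)) < r.
Proof.
move=> xy Nx Ny.
have r0 : 0 < r.
  rewrite lt_neqAle -[X in _ <= X]Nx minkowski_norm_ge0 andbT eq_sym.
  apply: contraNneq xy => r0.
  by rewrite (minkowski_norm_eq0 (etrans Nx r0)) (minkowski_norm_eq0 (etrans Ny r0)).
have unit_sphere u : N u = r -> N (r^-1 *: u) = 1.
  by move=> Nu; rewrite minkowski_normZ ?invr_ge0 ?ltW // Nu mulVf ?gt_eqF.
have rxy : r^-1 *: x != r^-1 *: y.
  by apply: contra xy => /eqP/scalerI -> //; rewrite invr_neq0 ?gt_eqF.
have := hmid rxy (unit_sphere _ Nx) (unit_sphere _ Ny).
rewrite -scalerDr scalerA mulrC -scalerA minkowski_normZ ?invr_ge0 ?ltW //.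
by rewrite mulrC ltr_pdivrMr // mul1r.
Qed.

Lemma open_segment_lt (r : R) x y z :
  N x <= r -> N y <= r -> open_segment x y z -> N z < r.
Proof.
move=> xr yr seg; have xy := open_segment_neq seg.
case/open_segmentP: seg => t [t0 t1 ->].
have [xlt|xge] := ltP (N x) r.
  by rewrite addrC; apply: minkowski_norm_convex_lt => //; lra.
have [ylt|yge] := ltP (N y) r.
  by apply: minkowski_norm_convex_lt => //; lra.
have Nx : N x = r by apply/eqP; rewrite eq_le xr.
have Ny : N y = r by apply/eqP; rewrite eq_le yr.
have := midpoint_lt xy Nx Ny; set m := 2^-1 *: (x + y) => mr.
have [ht|ht] := leP t 2^-1.
  have -> : (1 - t) *: x + t *: y = (1 - 2 * t) *: x + (2 * t) *: m.
    rewrite /m scalerA scalerDr (_ : 2 * t * 2^-1 = t); last by field.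
    by rewrite addrA -scalerDl; congr (_ *: _ + _); ring.
  by apply: minkowski_norm_convex_lt => //; lra.
have -> : (1 - t) *: x + t *: y = (2 * t - 1) *: y + (2 - 2 * t) *: m.
  rewrite /m scalerA scalerDr (_ : (2 - 2 * t) * 2^-1 = 1 - t); last by field.
  by rewrite addrCA -scalerDl; congr (_ + _ *: _); ring.
by apply: minkowski_norm_convex_lt => //; lra.
Qed.

Lemma strictly_subconvex_of_midpoint_lt : continuous N -> strictly_subconvex N.
Proof.
move=> cN r x y rcx rcy xy z seg.
have [xr yr] := (rel_closure_closed (sublevel_closed cN) rcx,
                 rel_closure_closed (sublevel_closed cN) rcy).
have zr := open_segment_lt xr yr seg.
by apply: (open_sub_rel_interior (@strict_sublevel_open r cN) _ zr) => w /ltW.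
Qed.

End MidpointLt.

End MinkowskiNorm.

Theorem mainTheorem1 (R : realType) (V : topologicalLmodType R) (N : V -> R) :
  minkowski_norm N ->
  (strictly_subconvex N <->
   (continuous N /\
    forall x y : V, x != y -> N x = 1 -> N y = 1 ->
      N (2^-1 *: (x + y)) < 1)).
Proof.
move=> hN; split.
- move=> hS; split; first exact: strictly_subconvex_continuous.
  exact: strictly_subconvex_midpoint_lt.
- by case=> cN hmid; apply: strictly_subconvex_of_midpoint_lt.
Qed.
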